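(* Let $\mathcal{S}$ be a finite skew translation generalized quadrangle of order $s$ with $s$ even, with elation group $G$ and associated $4$-gonal family $(G,\{A_i\}_{i=0}^s,\{A_i^*\}_{i=0}^s)$, and let $U_0:=\bigcap_{i=0}^s A_i^*$. Let $0\le i,j\le s$. Then: (1) if $g\in U_0$, then $|A_i^*\cap gG'|=|G'|$, and $|A_i\cap gG'|$ equals $1$ if $g\in G'$ and $0$ otherwise; (2) if $g\in U_0$, then $|A_i^*\cap g^G|=|g^G|$, and $|A_i\cap g^G|$ equals $1$ if $g=1$ and $0$ otherwise; (3) if $g\in A_j^*\setminus U_0$, then $|A_i^*\cap g^G|$ equals $|g^G|$ if $i=j$ and $0$ otherwise.
   Context: A generalized quadrangle of order $s$: each line has $s+1$ points, each point is on $s+1$ lines, and for each non-incident point-line pair $(P,\ell)$ there is a unique point on $\ell$ collinear with $P$. An elation about $P$ is an automorphism that is the identity or fixes each line through $P$ and no point not collinear with $P$; a symmetry about $P$ is an elation about $P$ fixing every point collinear with $P$. $\mathcal{S}$ is an elation generalized quadrangle with base point $P$ and elation group $G$ if $G$ consists of elations about $P$ and acts regularly on the points not collinear with $P$; it is a skew translation generalized quadrangle if $G$ contains a subgroup of $s$ symmetries about $P$. The associated $4$-gonal family: fix a point $y$ not collinear with $P$, let $M_0,\dots,M_s$ be the lines through $y$, let $z_i$ be the unique point of $M_i$ collinear with $P$, and let $A_i$, $A_i^*$ be the stabilizers in $G$ of $M_i$ and $z_i$ respectively. $g^G$ denotes the conjugacy class of $g$ and $G'$ the derived subgroup. *)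

From HB Require Import structures.
From mathcomp Require Import all_boot all_fingroup.
Set Implicit Arguments. Unset Strict Implicit. Unset Printing Implicit Defensive.

(* Automorphisms (collineations) are pairs (permutation of points,
   permutation of lines) preserving incidence; they live in the
   finGroupType  aut_type P L := {perm P} * {perm L}  (direct product). *)

Notation aut_type P L := ({perm P} * {perm L})%type.

Section GQ.
Variables (P L : finType) (I : P -> L -> bool).

(* collinearity (reflexive: every point is collinear with itself) *)
Definition coll (p q : P) : bool := [exists l, I p l && I q l].

Definition is_GQ (s : nat) : Prop :=
  [/\ 0 < s,
      forall l : L, #|[set p | I p l]| = s.+1,
      forall p : P, #|[set l | I p l]| = s.+1,
      forall (p q : P) (l m : L), p != q -> I p l -> I q l -> I p m -> I q m -> l = m
    & forall (p : P) (l : L), ~~ I p l -> #|[set q | I q l && coll p q]| = 1].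

Definition is_aut (g : aut_type P L) : bool :=
  [forall p, forall l, I (g.1 p) (g.2 l) == I p l].

Definition elation (x : P) (g : aut_type P L) : bool :=
  is_aut g &&
  ((g == 1)%g ||
   ([forall l, I x l ==> (g.2 l == l)] && [forall p, ~~ coll x p ==> (g.1 p != p)])).

Definition symmetry (x : P) (g : aut_type P L) : bool :=
  elation x g && [forall p, coll x p ==> (g.1 p == p)].

Definition is_EGQ (s : nat) (x : P) (G : {group aut_type P L}) : Prop :=
  [/\ is_GQ s,
      {in G, forall g, elation x g}
    & forall p q : P, ~~ coll x p -> ~~ coll x q ->
        #|[set g in G | g.1 p == q]| = 1].

Definition is_STGQ (s : nat) (x : P) (G : {group aut_type P L}) : Prop :=
  is_EGQ s x G /\
  exists H : {group aut_type P L},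
    [/\ H \subset G, #|H| = s & {in H, forall g, symmetry x g}].

(* 4-gonal family associated with the point y (not collinear with x):
   for a line M through y, foot x M is the unique point of M collinear
   with x, A_M the stabilizer of M in G, A*_M the stabilizer of foot x M. *)
Definition foot (x : P) (M : L) : P := odflt x [pick z | I z M && coll x z].

Definition Astab (G : {set aut_type P L}) (M : L) : {set aut_type P L} :=
  [set g in G | g.2 M == M].

Definition Astar (G : {set aut_type P L}) (x : P) (M : L) : {set aut_type P L} :=
  [set g in G | g.1 (foot x M) == foot x M].

Definition U0 (G : {set aut_type P L}) (x y : P) : {set aut_type P L} :=
  \bigcap_(M | I y M) Astar G x M.

End GQ.

From HB Require Import structures.
From mathcomp Require Import all_boot all_fingroup all_solvable zify.
Set Implicit Arguments. Unset Strict Implicit. Unset Printing Implicit Defensive.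

(* The stabilisers A*_M of the feet of the s + 1 lines M through y contain the
   group H of s symmetries about x and have order at least s^2, since H meets the
   line stabiliser A_M trivially and A_M moves y onto the s points of M other
   than its foot.  Two of them meet exactly in H: an element fixing two feet is,
   up to a symmetry, an elation fixing a line and a point off it, hence trivial.
   As |G| <= s^3, counting shows that the A*_M cover G; this makes each A*_M
   normal in G, and any two of them have product G.  For s even there are three
   lines through y, and three such factors with pairwise commutators in H force
   G/H to be abelian, so G' <= H <= U0.  Finally U0 is normal in G, lies in every
   A*_M and meets every A_M trivially, which gives the counts for cosets of G'
   and classes inside U0; the class of g in A*_Mj \ U0 stays in A*_Mj and avoids
   the normal subgroup U0, which contains A*_Mi :&: A*_Mj for Mi <> Mj. *)

Lemma leq_card_bigcup (I T : finType) (A : {pred I}) (F : I -> {set T}) :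
  #|\bigcup_(i in A) F i| <= \sum_(i in A) #|F i|.
Proof.
apply: (big_ind2 (fun (X : {set T}) n => #|X| <= n)) => // [|X m Y n leXm leYn].
  by rewrite cards0.
exact: leq_trans (leq_card_setU X Y) (leq_add leXm leYn).
Qed.

Lemma card_bigcup_disjoint (I T : finType) (A : {pred I}) (F : I -> {set T}) :
  {in A &, forall i j, i != j -> [disjoint F i & F j]} ->
  #|\bigcup_(i in A) F i| = \sum_(i in A) #|F i|.
Proof.
move=> disjF; rewrite -!big_enum /=.
have : {subset enum A <= A} by move=> i; rewrite mem_enum.
elim: (enum A) (enum_uniq A) => [|i r IHr] /=; first by rewrite !big_nil cards0.
move=> /andP[ri uniq_r] irA; rewrite !big_cons cardsU -IHr //; last first.
  by move=> j rj; apply: irA; rewrite inE rj orbT.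
suff /eqP-> : F i :&: \bigcup_(j <- r) F j == set0 by rewrite cards0 subn0.
rewrite setI_eq0 bigcup_seq; apply: bigcup_disjoint => j rj.
apply: disjF; rewrite ?irA ?inE ?eqxx ?rj ?orbT //.
by apply: contraNneq ri => ->.
Qed.

Lemma card_gt1_other (T : finType) (A : {pred T}) a :
  1 < #|A| -> exists2 b, b \in A & b != a.
Proof.
case/card_gt1P=> b [c [bA cA bc]].
by case: (eqVneq b a) => [ba | ?]; [exists c; rewrite // -ba eq_sym | exists b].
Qed.

Section GroupFacts.
Local Open Scope group_scope.
Lemma der1_sub_of_pairwise_products (gT : finGroupType) (G N A1 A2 A3 : {group gT}) :
  G \subset 'N(N) ->
  [~: A1, A2] \subset N -> [~: A1, A3] \subset N -> [~: A2, A3] \subset N ->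
  A1 * A2 = G -> A1 * A3 = G -> A2 * A3 = G -> G^`(1) \subset N.
Proof.
move=> nNG r12 r13 r23 G12 G13 G23.
have sAG (A B : {group gT}) : A * B = G -> A \subset G /\ B \subset G.
  by move=> <-; rewrite mulG_subl mulG_subr.
have [[sA1G sA2G] [_ sA3G]] := (sAG _ _ G12, sAG _ _ G13).
have cA (A B : {group gT}) :
    A \subset G -> B \subset G -> [~: A, B] \subset N -> A / N \subset 'C(B / N).
  by move=> sA sB; rewrite quotient_cents2 ?(subset_trans _ nNG).
have GNAB (A B : {group gT}) : A * B = G -> G / N = A / N * (B / N).
  by move=> GAB; rewrite -GAB quotientMl // (subset_trans _ nNG) // -GAB mulG_subl.
apply: der1_min nNG _; rewrite /abelian {1}(GNAB _ _ G12) mul_subG //=.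
  by rewrite (GNAB _ _ G23) /= centM subsetI !cA.
by rewrite (GNAB _ _ G13) /= centM subsetI !cA // commGC.
Qed.

Lemma card_setI_trivial_meet (gT : finGroupType) (A B X : {set gT}) :
  A :&: B \subset [1] -> 1 \in A -> X \subset B -> #|A :&: X| = (1 \in X).
Proof.
move=> AB1 A1 XB; have AX1 : A :&: X \subset [1] := subset_trans (setIS A XB) AB1.
case: (boolP (1 \in X)) => X1.
  by rewrite (_ : A :&: X = [1]) ?cards1 //; apply/eqP; rewrite eqEsubset AX1 sub1set inE A1.
apply/eqP; rewrite cards_eq0 -subset0; apply/subsetP => k kAX.
by have /set1P k1 := subsetP AX1 k kAX; move: kAX X1; rewrite k1 => /setIP[_ ->].
Qed.

End GroupFacts.

Section Quadrangle.
Variables (P L : finType) (I : P -> L -> bool) (s : nat).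
Hypothesis GQ : is_GQ I s.
Local Notation coll := (coll I).

Lemma order_gt0 : 0 < s. Proof. by case: GQ. Qed.

Lemma card_line l : #|[set p | I p l]| = s.+1. Proof. by case: GQ. Qed.

Lemma card_pencil p : #|[set l | I p l]| = s.+1. Proof. by case: GQ. Qed.

Lemma card_lineD1 p l : I p l -> #|[set q | I q l] :\ p| = s.
Proof. by move=> pl; have := cardsD1 p [set q | I q l]; rewrite card_line inE pl => -[]. Qed.

Lemma card_pencilD1 p l : I p l -> #|[set m | I p m] :\ l| = s.
Proof. by move=> pl; have := cardsD1 l [set m | I p m]; rewrite card_pencil inE pl => -[]. Qed.

Lemma line_uniq p q l m : p != q -> I p l -> I q l -> I p m -> I q m -> l = m.
Proof. by case: GQ => _ _ _ uniq_line _; apply: uniq_line. Qed.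

Lemma proj_uniq p l q1 q2 :
  ~~ I p l -> I q1 l -> coll p q1 -> I q2 l -> coll p q2 -> q1 = q2.
Proof.
case: GQ => _ _ _ _ proj /proj/eqP/cards1P[a proj_a] q1l pq1 q2l pq2.
have : q1 \in [set q | I q l && coll p q] by rewrite inE q1l pq1.
have : q2 \in [set q | I q l && coll p q] by rewrite inE q2l pq2.
by rewrite proj_a !inE => /eqP-> /eqP->.
Qed.

Lemma proj_exists p l : ~~ I p l -> exists2 q, I q l & coll p q.
Proof.
case: GQ => _ _ _ _ proj /proj/eqP/cards1P[a proj_a].
have : a \in [set q | I q l && coll p q] by rewrite proj_a set11.
by rewrite inE => /andP[]; exists a.
Qed.

Lemma collP p q : reflect (exists2 l, I p l & I q l) (coll p q).
Proof.
apply: (iffP existsP) => [[l /andP[pl ql]] | [l pl ql]]; exists l => //.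
by rewrite pl ql.
Qed.

Lemma coll_sym p q : coll p q = coll q p.
Proof. by apply/collP/collP => -[l pl ql]; exists l. Qed.

Lemma coll_line p q l : I p l -> I q l -> coll p q.
Proof. by move=> pl ql; apply/collP; exists l. Qed.

Lemma exists_line p : exists l, I p l.
Proof.
have /card_gt0P[l] : 0 < #|[set l | I p l]| by rewrite card_pencil.
by rewrite inE; exists l.
Qed.

Lemma other_line p l : exists2 m, I p m & m != l.
Proof.
have [|m] := @card_gt1_other _ [set m | I p m] l; last by rewrite inE; exists m.
by rewrite card_pencil ltnS order_gt0.
Qed.

Lemma other_point l p : exists2 q, I q l & q != p.
Proof.
have [|q] := @card_gt1_other _ [set q | I q l] p; last by rewrite inE; exists q.
by rewrite card_line ltnS order_gt0.
Qed.

Lemma exists_noncoll_on_line x l : ~~ I x l -> exists2 p, I p l & ~~ coll x p.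
Proof.
move=> xl; have [z zl xz] := proj_exists xl; have [p pl pz] := other_point l z.
by exists p => //; apply: contra pz => xp; apply/eqP; apply: (proj_uniq xl).
Qed.

Lemma autI g p l : is_aut I g -> I (g.1 p) (g.2 l) = I p l.
Proof. by move/forallP/(_ p)/forallP/(_ l)/eqP. Qed.

Lemma aut_coll g p q : is_aut I g -> coll (g.1 p) (g.1 q) = coll p q.
Proof.
move=> autg; apply/collP/collP => [[l pl ql] | [l pl ql]]; last first.
  by exists (g.2 l); rewrite autI.
by exists ((g.2^-1)%g l); rewrite -(autI _ _ autg) permKV.
Qed.

End Quadrangle.

Section Elation.
Variables (P L : finType) (I : P -> L -> bool) (s : nat).
Hypothesis GQ : is_GQ I s.
Variables (x : P) (G : {group aut_type P L}).
Hypothesis elG : {in G, forall g, elation I x g}.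
Hypothesis regG : forall p q : P, ~~ coll I x p -> ~~ coll I x q ->
  #|[set g in G | g.1 p == q]| = 1.

Local Notation coll := (coll I).
Local Open Scope group_scope.

Lemma autG g : g \in G -> is_aut I g.
Proof. by case/elG/andP. Qed.

Lemma G_fix_line g l : g \in G -> I x l -> g.2 l = l.
Proof.
move=> gG xl; have /andP[_ /orP[/eqP-> | /andP[/forallP fix_l _]]] := elG gG.
  by rewrite /= perm1.
exact/eqP/(implyP (fix_l l)).
Qed.

Lemma G_semiregular g p : g \in G -> ~~ coll x p -> g.1 p = p -> g = 1.
Proof.
move=> gG xp gp; have /andP[_ /orP[/eqP // | /andP[_ /forallP move_p]]] := elG gG.
by have := implyP (move_p p) xp; rewrite gp eqxx.
Qed.

Lemma G_fix_base g : g \in G -> g.1 x = x.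
Proof.
move=> gG; have [l xl] := exists_line GQ x; have [m xm ml] := other_line GQ x l.
apply: contraNeq ml => gx_x; apply/eqP/(line_uniq GQ gx_x _ xm _ xl).
  by rewrite -(G_fix_line gG xm) autI ?autG.
by rewrite -(G_fix_line gG xl) autI ?autG.
Qed.

Lemma G_coll_base g p : g \in G -> coll x (g.1 p) = coll x p.
Proof. by move=> gG; rewrite -{1}(G_fix_base gG) aut_coll ?autG. Qed.

Lemma G_transitive p q : ~~ coll x p -> ~~ coll x q -> exists2 g, g \in G & g.1 p = q.
Proof.
move=> xp xq; have /eqP/cards1P[g Gpq] := regG xp xq.
have : g \in [set g in G | g.1 p == q] by rewrite Gpq set11.
by rewrite inE => /andP[gG /eqP]; exists g.
Qed.

Lemma G_regular p g h : ~~ coll x p -> g \in G -> h \in G -> g.1 p = h.1 p -> g = h.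
Proof.
move=> xp gG hG ghp; have xgp : ~~ coll x (g.1 p) by rewrite G_coll_base.
have /eqP/cards1P[a Gpgp] := regG xp xgp.
have : g \in [set k in G | k.1 p == g.1 p] by rewrite inE gG eqxx.
have : h \in [set k in G | k.1 p == g.1 p] by rewrite inE hG ghp eqxx.
by rewrite Gpgp !inE => /eqP-> /eqP->.
Qed.

Lemma G_stab_line_point_trivial p M M' z g :
    ~~ coll x p -> I p M -> I p M' -> M != M' -> I z M' -> coll x z ->
  g \in G -> g.2 M = M -> g.1 z = z -> g = 1.
Proof.
move=> xp pM pM' MM' zM' xz gG gM gz.
have zp : z != p by apply: contraNneq xp => <-.
have zM : ~~ I z M by apply: contra MM' => zM; apply/eqP/(line_uniq GQ zp zM pM zM' pM').
have zp_coll : coll z p := coll_line zM' pM'.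
apply: (G_semiregular gG xp); apply: (proj_uniq GQ zM _ _ pM zp_coll).
- by rewrite -gM autI ?autG.
- by rewrite -{1}gz aut_coll ?autG.
Qed.

(* A point off [x] projects onto a point [w <> x] of a fixed line [N] through [x],
   and lies on one of the [s] lines through [w] other than [N]. *)
Lemma card_G_le p : ~~ coll x p -> #|G| <= s * s * s.
Proof.
move=> xp; have [N xN] := exists_line GQ x.
have -> : #|G| = #|[set g.1 p | g : aut_type P L in G]|.
  by rewrite card_in_imset // => g h gG hG; apply: G_regular.
set U := \bigcup_(w in [set q | I q N] :\ x)
           \bigcup_(l in [set l | I w l] :\ N) ([set q | I q l] :\ w).
have GpU : [set g.1 p | g : aut_type P L in G] \subset U.
  apply/subsetP => _ /imsetP[g gG ->]; set q := g.1 p.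
  have xq : ~~ coll x q by rewrite G_coll_base.
  have qN : ~~ I q N by apply: contra xq => qN; apply: coll_line xN qN.
  have [w wN /collP[l ql wl]] := proj_exists GQ qN.
  apply/bigcupP; exists w.
    by rewrite !inE wN andbT; apply: contraNneq xq => <-; apply/collP; exists l.
  apply/bigcupP; exists l; first by rewrite !inE wl andbT; apply: contraNneq qN => <-.
  by rewrite !inE ql andbT; apply: contraNneq xq => ->; apply: coll_line xN wN.
apply: leq_trans (subset_leq_card GpU) _; apply: leq_trans (leq_card_bigcup _ _) _.
rewrite -{1}(card_lineD1 GQ xN) -mulnA -sum_nat_const; apply: leq_sum => w.
rewrite !inE => /andP[_ wN]; apply: leq_trans (leq_card_bigcup _ _) _.
rewrite -{1}(card_pencilD1 GQ wN) -sum_nat_const; apply: leq_sum => l.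
by rewrite !inE => /andP[_ wl]; rewrite (card_lineD1 GQ wl).
Qed.

Lemma Astar_group M : group_set (Astar I G x M).
Proof.
apply/group_setP; split=> [|a b]; first by rewrite inE group1 /= perm1 eqxx.
rewrite !inE => /andP[aG /eqP az] /andP[bG /eqP bz].
by rewrite groupM //= permM az bz eqxx.
Qed.
Canonical Astar_group_of M := Group (Astar_group M).

Lemma Astab_group M : group_set (Astab G M).
Proof.
apply/group_setP; split=> [|a b]; first by rewrite inE group1 /= perm1 eqxx.
rewrite !inE => /andP[aG /eqP aM] /andP[bG /eqP bM].
by rewrite groupM //= permM aM bM eqxx.
Qed.
Canonical Astab_group_of M := Group (Astab_group M).

Lemma Astar_subG M : Astar I G x M \subset G.
Proof. by apply/subsetP => g; rewrite inE => /andP[]. Qed.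

End Elation.

Section Symmetries.
Variables (P L : finType) (I : P -> L -> bool) (s : nat).
Hypothesis GQ : is_GQ I s.
Variables (x : P) (G H : {group aut_type P L}).
Hypothesis elG : {in G, forall g, elation I x g}.
Hypotheses (sHG : H \subset G) (cardH : #|H| = s)
           (symH : {in H, forall h, symmetry I x h}).

Local Notation coll := (coll I).
Local Open Scope group_scope.

Lemma H_fix h p : h \in H -> coll x p -> h.1 p = p.
Proof. by case/symH/andP=> _ /forallP/(_ p)/implyP fix_p /fix_p/eqP. Qed.

Lemma H_line_inj M : ~~ I x M -> {in H &, injective (fun h : aut_type P L => h.2 M)}.
Proof.
move=> xM h1 h2 h1H h2H /= h12M; apply/eqP; rewrite eq_mulgV1; apply/eqP.
have kH : h1 * h2^-1 \in H by rewrite groupM ?groupV.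
have [p pM xp] := exists_noncoll_on_line GQ xM.
have [M' pM' MM'] := other_line GQ p M; rewrite eq_sym in MM'.
have xM' : ~~ I x M' by apply: contra xp => xM'; apply: coll_line xM' pM'.
have [z zM' xz] := proj_exists GQ xM'.
apply: (G_stab_line_point_trivial GQ elG xp pM pM' MM' zM' xz).
- exact: subsetP kH.
- by rewrite /= permM h12M permK.
- exact: H_fix.
Qed.

(* [H] fixes the line [xz] and acts semiregularly on the remaining [s] lines through [z]. *)
Lemma H_lines_transitive z M l : coll x z -> I z M -> ~~ I x M ->
  I z l -> ~~ I x l -> exists2 h, h \in H & h.2 M = l.
Proof.
move=> xz zM xM zl xl; have [N xN zN] := collP _ _ _ xz.
have HM_sub : [set h.2 M | h : aut_type P L in H] \subset [set m | I z m] :\ N.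
  apply/subsetP => _ /imsetP[h hH ->]; have hG := subsetP sHG h hH.
  rewrite !inE -{1}(H_fix hH xz) autI ?(autG elG) // zM andbT.
  by apply: contraNneq xM => hMN; rewrite -(autI x M (autG elG hG)) hMN (G_fix_base GQ elG).
have HM_eq : [set h.2 M | h : aut_type P L in H] = [set m | I z m] :\ N.
  apply/eqP; rewrite eqEcard HM_sub card_in_imset; last exact: H_line_inj.
  by rewrite cardH (card_pencilD1 GQ zN) leqnn.
have : l \in [set m | I z m] :\ N by rewrite !inE zl andbT; apply: contraNneq xl => ->.
by rewrite -HM_eq => /imsetP[h hH ->]; exists h.
Qed.

Lemma stab_feet_sub_H p M M' z z' g : ~~ coll x p -> I p M -> I p M' -> M != M' ->
    I z M -> coll x z -> I z' M' -> coll x z' ->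
  g \in G -> g.1 z = z -> g.1 z' = z' -> g \in H.
Proof.
move=> xp pM pM' MM' zM xz z'M' xz' gG gz gz'.
have xM : ~~ I x M by apply: contra xp => xM; apply: coll_line xM pM.
have zgM : I z (g.2 M) by rewrite -{1}gz autI ?(autG elG).
have xgM : ~~ I x (g.2 M) by rewrite -{1}(G_fix_base GQ elG gG) autI ?(autG elG).
have [h hH hM] := H_lines_transitive xz zM xM zgM xgM.
have hG := subsetP sHG h hH.
suff /eqP : g * h^-1 = 1 by rewrite -eq_mulgV1 => /eqP->.
apply: (G_stab_line_point_trivial GQ elG xp pM pM' MM' z'M' xz').
- by rewrite groupM ?groupV.
- by rewrite /= permM -hM permK.
- by rewrite /= permM gz' -{1}(H_fix hH xz') permK.
Qed.

Lemma stab_noncoll_sub_H w z g : coll x w -> coll x z -> ~~ coll w z ->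
  g \in G -> g.1 w = w -> g.1 z = z -> g \in H.
Proof.
move=> xw xz wz gG gw gz; have [N xN zN] := collP _ _ _ xz.
have zx : z != x by apply: contraNneq wz => ->; rewrite coll_sym.
have [M zM MN] := other_line GQ z N.
have xM : ~~ I x M by apply: contra MN => xM; apply/eqP; exact: (line_uniq GQ zx zM xM zN xN).
have wM : ~~ I w M by apply: contra wz => wM; apply: coll_line wM zM.
have [p pM /collP[l wl pl]] := proj_exists GQ wM.
have xp : ~~ coll x p.
  apply: contra wz => xp; rewrite (proj_uniq GQ xM zM xz pM xp).
  exact: coll_line wl pl.
have Ml : M != l by apply: contraNneq wM => ->.
exact: (stab_feet_sub_H xp pM pl Ml zM xz wl xw gG gz gw).
Qed.

End Symmetries.

Section FourGonalFamily.
Variables (P L : finType) (I : P -> L -> bool) (s : nat).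
Hypothesis GQ : is_GQ I s.
Variables (x : P) (G H : {group aut_type P L}).
Hypothesis elG : {in G, forall g, elation I x g}.
Hypothesis regG : forall p q : P, ~~ coll I x p -> ~~ coll I x q ->
  #|[set g in G | g.1 p == q]| = 1.
Hypotheses (sHG : H \subset G) (cardH : #|H| = s)
           (symH : {in H, forall h, symmetry I x h}).
Variable y : P.
Hypothesis xy : ~~ coll I x y.

Local Notation coll := (coll I).
Local Notation ft M := (foot I x M).
Local Notation Ast M := (Astar I G x M).
Local Notation Asb M := (Astab G M).
Local Open Scope group_scope.

Lemma yline_not_x M : I y M -> ~~ I x M.
Proof. by move=> yM; apply: contra xy => xM; apply: coll_line xM yM. Qed.

Lemma foot_spec M : I y M -> I (ft M) M /\ coll x (ft M).
Proof.
move=> yM; rewrite /foot; case: pickP => [z /andP[] // | no_foot].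
have [z zM xz] := proj_exists GQ (yline_not_x yM).
by have := no_foot z; rewrite zM xz.
Qed.

Lemma foot_uniq M q : I y M -> I q M -> coll x q -> q = ft M.
Proof.
move=> yM qM xq; have [fM xf] := foot_spec yM.
exact: (proj_uniq GQ (yline_not_x yM) qM xq fM xf).
Qed.

Lemma feet_noncoll M M' : I y M -> I y M' -> M != M' -> ~~ coll (ft M) (ft M').
Proof.
move=> yM yM' MM'; have [[fM xf] [f'M' xf']] := (foot_spec yM, foot_spec yM').
have f'y : ft M' != y by apply: contraNneq xy => <-.
have f'M : ~~ I (ft M') M.
  by apply: contra MM' => f'M; apply/eqP; apply: (line_uniq GQ f'y f'M yM f'M' yM').
apply: contra xy => ff'; suff -> : y = ft M by [].
by apply: (proj_uniq GQ f'M yM (coll_line f'M' yM') fM); rewrite coll_sym.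
Qed.

Lemma H_sub_Astar M : I y M -> H \subset Ast M.
Proof.
move=> yM; apply/subsetP => h hH; rewrite inE (subsetP sHG) //=.
by rewrite (H_fix symH hH) //; case: (foot_spec yM).
Qed.

Lemma Astab_sub_Astar M : I y M -> Asb M \subset Ast M.
Proof.
move=> yM; apply/subsetP => g; rewrite !inE => /andP[gG /eqP gM]; rewrite gG /=.
have [fM xf] := foot_spec yM; apply/eqP/foot_uniq => //.
  by rewrite -[X in I _ X]gM autI ?(autG elG).
by rewrite (G_coll_base GQ elG).
Qed.

Lemma Astab_Astar_trivial M M' g : I y M -> I y M' -> M != M' ->
  g \in Asb M -> g \in Ast M' -> g = 1.
Proof.
move=> yM yM' MM'; rewrite !inE => /andP[gG /eqP gM] /andP[_ /eqP gf].
have [f'M' xf'] := foot_spec yM'.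
exact: (G_stab_line_point_trivial GQ elG xy yM yM' MM' f'M' xf' gG gM gf).
Qed.

Lemma AstarI M M' : I y M -> I y M' -> M != M' -> Ast M :&: Ast M' = H.
Proof.
move=> yM yM' MM'; apply/eqP.
rewrite eqEsubset [H \subset _]subsetI (H_sub_Astar yM) (H_sub_Astar yM') !andbT.
apply/subsetP => g; rewrite !inE => /andP[/andP[gG /eqP gf] /andP[_ /eqP gf']].
have [[fM xf] [f'M' xf']] := (foot_spec yM, foot_spec yM').
exact: (stab_feet_sub_H GQ elG sHG cardH symH xy yM yM' MM' fM xf f'M' xf' gG gf gf').
Qed.

(* [g |-> g.1 y] maps [Astab G M] onto the points of [M] other than its foot. *)
Lemma card_Astab_ge M : I y M -> s <= #|Asb M|.
Proof.
move=> yM; have [fM xf] := foot_spec yM.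
rewrite -(card_lineD1 GQ fM).
apply: leq_trans (leq_imset_card (fun g : aut_type P L => g.1 y) _).
apply/subset_leq_card/subsetP => q; rewrite !inE => /andP[qf qM].
have xq : ~~ coll x q by apply: contra qf => xq; apply/eqP/foot_uniq.
have [g gG gy] := G_transitive regG xy xq.
have [N xN fN] := collP _ _ _ xf.
have qN : ~~ I q N by apply: contra xq => qN; apply: coll_line xN qN.
have gf : g.1 (ft M) = ft M.
  apply: (proj_uniq GQ qN _ _ fN) => //; last exact: coll_line qM fM.
  - by rewrite -(G_fix_line elG gG xN) autI ?(autG elG).
  - by rewrite -gy aut_coll ?(autG elG) // coll_sym (coll_line fM yM).
apply/imsetP; exists g => //; rewrite inE gG /=; apply/eqP.
apply: (line_uniq GQ qf _ _ qM fM).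
- by rewrite -gy autI ?(autG elG).
- by rewrite -{1}gf autI ?(autG elG).
Qed.

Lemma card_Astar_ge M : I y M -> s * s <= #|Ast M|.
Proof.
move=> yM; have [M' yM' MM'] := other_line GQ y M; rewrite eq_sym in MM'.
have HAsb1 : H :&: Asb M = 1.
  apply/trivgP/subsetP => g; rewrite inE => /andP[gH gM].
  by rewrite (Astab_Astar_trivial yM yM' MM' gM (subsetP (H_sub_Astar yM') g gH)) set11.
have := mul_cardG H (Astab_group_of G M); rewrite HAsb1 cards1 muln1 cardH /= => cardHAsb.
apply: leq_trans (leq_mul (leqnn s) (card_Astab_ge yM)) _; rewrite cardHAsb.
by apply/subset_leq_card/mul_subG; [apply: H_sub_Astar | apply: Astab_sub_Astar].
Qed.

Lemma card_Astar_offH_ge :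
  s.+1 * (s * s - s) <= #|\bigcup_(M in [set M | I y M]) (Ast M :\: H)|.
Proof.
rewrite card_bigcup_disjoint => [|M M']; last first.
  by rewrite !inE => yM yM' MM'; rewrite -setI_eq0 -setDIl AstarI // setDv.
rewrite -(card_pencil GQ y) -sum_nat_const; apply: leq_sum => M; rewrite inE => yM.
by rewrite cardsD (setIidPr (H_sub_Astar yM)) cardH leq_sub2r ?card_Astar_ge.
Qed.

(* [H] and the disjoint sets [Ast M :\: H] already account for [s ^ 3 >= #|G|] elements. *)
Lemma Astar_cover g : g \in G -> exists2 M, I y M & g \in Ast M.
Proof.
move=> gG; have [M /andP[yM gM] | no_M] := pickP (fun M => I y M && (g \in Ast M)).
  by exists M.
exfalso; have [M0 yM0] := exists_line GQ y.
set B := \bigcup_(M in [set M | I y M]) (Ast M :\: H).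
have gH : g \notin H.
  by apply: contraFN (no_M M0) => gH; rewrite yM0 (subsetP (H_sub_Astar yM0)).
have gB : g \notin B.
  by apply/bigcupP => -[M]; rewrite inE => yM /setDP[gM _]; have := no_M M; rewrite yM gM.
have HB0 : H :&: B = set0.
  by apply/disjoint_setI0/bigcup_disjoint => M _; rewrite -setI_eq0 setIDA setDIl setDv set0I.
have sHBG : g |: (H :|: B) \subset G.
  rewrite !subUset sub1set gG sHG /=; apply/bigcupsP => M _.
  exact: subset_trans (subsetDl _ _) (Astar_subG _ _ _ _).
have := leq_trans (subset_leq_card sHBG) (card_G_le GQ elG regG xy).
rewrite cardsU1 !inE negb_or gH gB cardsU HB0 cards0 subn0 cardH /=.
move/(leq_trans (leq_add (leqnn 1) (leq_add (leqnn s) card_Astar_offH_ge))).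
have := leq_pmulr s (order_gt0 GQ); nia.
Qed.

(* If [a] fixes the foot [z] of [M], then [a ^ g] fixes [g.1 z], a point of the line [xz];
   if [a ^ g] also fixes the foot of another line through [y], these two fixed points
   are not collinear, so [a ^ g] is a symmetry and fixes [z] anyway. *)
Lemma AstarJ M a g : I y M -> a \in Ast M -> g \in G -> a ^ g \in Ast M.
Proof.
move=> yM aM gG; have aG := subsetP (Astar_subG I x G M) a aM.
have aJG : a ^ g \in G by rewrite groupJ.
have [M' yM' aJM'] := Astar_cover aJG.
have [-> // | MM'] := eqVneq M M'.
have [[zM xz] [z'M' xz']] := (foot_spec yM, foot_spec yM').
move: aM aJM' => /setIdP[_ /eqP az] /setIdP[_ /eqP aJz'].
set z := ft M in zM xz az *; set z' := ft M' in z'M' xz' aJz' *; set w := g.1 z.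
have aJw : (a ^ g).1 w = w by rewrite conjgE /= !permM permK az.
have [N xN zN] := collP _ _ _ xz.
have wN : I w N by rewrite -(G_fix_line elG gG xN) autI ?(autG elG).
have wx : w != x.
  rewrite -(G_fix_base GQ elG gG) (inj_eq perm_inj).
  by apply: contraNneq (yline_not_x yM) => <-.
have z'N : ~~ I z' N.
  by apply: contra (feet_noncoll yM yM' MM') => z'N; apply: coll_line zN z'N.
have wz' : ~~ coll w z'.
  apply: contra wx => wz'; apply/eqP.
  by apply: (proj_uniq GQ z'N wN _ xN); rewrite 1?coll_sym.
have xw : coll x w by rewrite (G_coll_base GQ elG).
apply/(subsetP (H_sub_Astar yM)).
exact: (stab_noncoll_sub_H GQ elG sHG cardH symH xw xz' wz' aJG aJw aJz').
Qed.

Lemma Astar_normal M : I y M -> Ast M <| G.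
Proof.
move=> yM; rewrite /normal Astar_subG; apply/normsP => g gG.
apply/eqP; rewrite eqEcard cardJg leqnn andbT; apply/subsetP => _ /imsetP[a aM ->].
exact: AstarJ.
Qed.

Lemma commg_Astar_sub_H M M' : I y M -> I y M' -> M != M' -> [~: Ast M, Ast M'] \subset H.
Proof.
move=> yM yM' MM'; rewrite -(AstarI yM yM' MM').
have nAG N : I y N -> G \subset 'N(Ast N) by move/Astar_normal/normal_norm.
by apply: commg_subI; rewrite subsetI subxx (subset_trans (Astar_subG _ _ _ _)) ?nAG.
Qed.

Lemma AstarM M M' : I y M -> I y M' -> M != M' -> Ast M * Ast M' = G.
Proof.
move=> yM yM' MM'; apply/eqP; rewrite eqEcard mul_subG ?Astar_subG //=.
have := mul_cardG (Astar_group_of I x G M) (Astar_group_of I x G M').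
rewrite /= (AstarI yM yM' MM') cardH => cardAA.
apply: leq_trans (card_G_le GQ elG regG xy) _.
rewrite -(leq_pmul2r (order_gt0 GQ)) -mulnA -cardAA.
exact: leq_mul (card_Astar_ge yM) (card_Astar_ge yM').
Qed.

Lemma der1_sub_H : ~~ odd s -> G^`(1) \subset H.
Proof.
move=> even_s; have s_gt1 : 1 < s by case: s even_s (order_gt0 GQ) => [|[]].
have [M1 yM1] := exists_line GQ y.
have [M2 yM2 M12] := other_line GQ y M1; rewrite eq_sym in M12.
have [|M3] := @card_gt1_other _ ([set M | I y M] :\ M1) M2.
  by rewrite (card_pencilD1 GQ yM1).
rewrite !inE => /andP[M31 yM3] M32.
have nHG : G \subset 'N(H).
  by rewrite -(AstarI yM1 yM2 M12) normsI ?normal_norm ?Astar_normal.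
apply: (@der1_sub_of_pairwise_products _ G H (Astar_group_of I x G M1)
         (Astar_group_of I x G M2) (Astar_group_of I x G M3) nHG);
  by rewrite /= ?commg_Astar_sub_H ?AstarM // eq_sym.
Qed.

Local Notation U := (U0 I G x y).

Lemma U0_group_set : group_set U. Proof. exact: group_set_bigcap. Qed.
Canonical U0_group := Group U0_group_set.

Lemma U0_sub_Astar M : I y M -> U \subset Ast M.
Proof. exact: bigcap_inf. Qed.

Lemma H_sub_U0 : H \subset U.
Proof. by apply/bigcapsP => M; apply: H_sub_Astar. Qed.

Lemma U0_normal : G \subset 'N(U).
Proof. by apply/norms_bigcap/bigcapsP => M /Astar_normal/normal_norm. Qed.

Lemma Astab_U0_trivial M : I y M -> Asb M :&: U \subset [1].
Proof.
move=> yM; have [M' yM' MM'] := other_line GQ y M; rewrite eq_sym in MM'.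
apply/subsetP => g /setIP[gM /bigcapP gU]; rewrite inE.
by rewrite (Astab_Astar_trivial yM yM' MM' gM (gU M' yM')).
Qed.

Lemma card_meet_coset_der1 M g : ~~ odd s -> I y M -> g \in U ->
  #|Ast M :&: g *: G^`(1)| = #|G^`(1)| /\ #|Asb M :&: g *: G^`(1)| = (g \in G^`(1)).
Proof.
move=> even_s yM gU; have gDU : g *: G^`(1) \subset U.
  by rewrite -sub_lcosetV lcoset_id ?groupV // (subset_trans (der1_sub_H even_s) H_sub_U0).
split; first by rewrite (setIidPr (subset_trans gDU (U0_sub_Astar yM))) card_lcoset.
by rewrite (card_setI_trivial_meet (Astab_U0_trivial yM) (group1 _) gDU) mem_lcoset mulg1 groupV.
Qed.

Lemma card_meet_class_U0 M g : I y M -> g \in U ->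
  #|Ast M :&: g ^: G| = #|g ^: G| /\ #|Asb M :&: g ^: G| = (g == 1).
Proof.
move=> yM gU; have gGU : g ^: G \subset U by rewrite class_sub_norm ?U0_normal.
split; first by rewrite (setIidPr (subset_trans gGU (U0_sub_Astar yM))).
by rewrite (card_setI_trivial_meet (Astab_U0_trivial yM) (group1 _) gGU) class_sym class1G inE.
Qed.

Lemma card_Astar_meet_class_notU0 M M' g : I y M -> I y M' -> g \in Ast M' :\: U ->
  #|Ast M :&: g ^: G| = (if M == M' then #|g ^: G| else 0).
Proof.
move=> yM yM' /setDP[gM' gU]; have nAG := normal_norm (Astar_normal yM').
have [-> | MM'] := eqVneq M M'; first by rewrite (setIidPr _) // class_sub_norm.
apply/eqP; rewrite cards_eq0 -subset0; apply/subsetP => k /setIP[kM /imsetP[h hG kE]].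
rewrite {}kE in kM.
have gJM' : g ^ h \in Ast M' by rewrite memJ_norm ?(subsetP nAG).
have : g ^ h \in U by apply: (subsetP H_sub_U0); rewrite -(AstarI yM yM' MM') inE kM gJM'.
by rewrite memJ_norm ?(subsetP U0_normal) // (negbTE gU).
Qed.

End FourGonalFamily.

Theorem lemma2p7 (P L : finType) (I : P -> L -> bool) (s : nat)
    (x : P) (G : {group aut_type P L}) (y : P) (Mi Mj : L) :
  is_STGQ I s x G -> ~~ odd s ->
  ~~ coll I x y -> I y Mi -> I y Mj ->
  [/\ forall g, g \in U0 I G x y ->
        #|Astar I G x Mi :&: (g *: (G^`(1))%g)%g| = #|(G^`(1))%g| /\
        #|Astab G Mi :&: (g *: (G^`(1))%g)%g| = (if g \in (G^`(1))%g then 1 else 0),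
      forall g, g \in U0 I G x y ->
        #|Astar I G x Mi :&: (g ^: G)%g| = #|(g ^: G)%g| /\
        #|Astab G Mi :&: (g ^: G)%g| = (if (g == 1)%g then 1 else 0)
    & forall g, g \in Astar I G x Mj :\: U0 I G x y ->
        #|Astar I G x Mi :&: (g ^: G)%g| = (if Mi == Mj then #|(g ^: G)%g| else 0)].
Proof.
move=> [[GQ elG regG] [H [sHG cardH symH]]] even_s xy yMi yMj.
split=> g.
- exact: (card_meet_coset_der1 GQ elG regG sHG cardH symH xy even_s yMi).
- exact: (card_meet_class_U0 GQ elG regG sHG cardH symH xy yMi).
- exact: (card_Astar_meet_class_notU0 GQ elG regG sHG cardH symH xy yMi yMj).
Qed.
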